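(* Let $l\ge0$ be an integer and, for $\zeta,\eta>0$, let $$\mathcal{G}_0(\zeta,\eta)=\frac{\eta^{l+1}\zeta^{-l}-\zeta^{l+1}\eta^{-l}}{2l+1},\qquad H_0(\zeta)=\sqrt{\tfrac{2}{\pi}}\,e^{\zeta}\zeta^{1/2}K_{l+1/2}(\zeta),$$ where $K_{l+1/2}$ is the modified Bessel function of the second kind. Then for every $\zeta>0$, $$\int_\zeta^\infty e^{-\eta+\zeta}\mathcal{G}_0(\zeta,\eta)\frac{H_0(\eta)}{H_0(\zeta)}d\eta=1,\qquad \int_\zeta^\infty e^{-\eta+\zeta}\,\partial_\zeta\mathcal{G}_0(\zeta,\eta)\frac{H_0(\eta)}{H_0(\zeta)}d\eta=-1+\frac{H_0'(\zeta)}{H_0(\zeta)}.$$ *)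

From Stdlib Require Import Reals.
From Coquelicot Require Import Coquelicot.
Open Scope R_scope.

(* Modified Bessel function of the second kind, defined (for x > 0) by the
   standard integral representation K_nu(x) = int_0^oo exp(-x cosh t) cosh(nu t) dt
   (DLMF 10.32.9). *)
Definition BesselK (nu x : R) : R :=
  RInt_gen (fun t => exp (- x * cosh t) * cosh (nu * t))
           (at_point 0) (Rbar_locally p_infty).

Definition G0 (l : nat) (zeta eta : R) : R :=
  (eta ^ (l + 1) / zeta ^ l - zeta ^ (l + 1) / eta ^ l) / (2 * INR l + 1).

Definition H0 (l : nat) (zeta : R) : R :=
  sqrt (2 / PI) * exp zeta * sqrt zeta * BesselK (INR l + / 2) zeta.

(* Up to a positive constant, [H0 l] is the reduced Bessel polynomial [q_l] in [1/x]:
   the substitution [w = sqrt (2x) sinh (t/2)] turns [K_(1/2)] into a Gaussian integral,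
   so [K_(1/2) x = c e^(-x) / sqrt x], and integration by parts gives the recurrence
   [K_(nu+1) = K_(nu-1) + 2 nu / x K_nu].  Hence [y = e^(-x) q_l] solves
   [y'' = (1 + l(l+1)/x^2) y], whereas [eta |-> G0 l zeta eta] and its [zeta]-derivative
   are combinations of [eta^(l+1)] and [eta^(-l)], which solve [g'' = l(l+1)/x^2 g].
   For such a pair [g y' - g' y] is an antiderivative of [g y] that vanishes at infinity,
   so both integrals are boundary values at [eta = zeta]: there [G0] vanishes with unit
   slope, while its [zeta]-derivative equals [-1] with zero slope. *)

From Stdlib Require Import Reals Lra Lia Factorial.
From Coquelicot Require Import Coquelicot.
Open Scope R_scope.

Lemma filter_prod_at_point_p_infty (a : R) :
  filter_prod (at_point a) (Rbar_locally p_infty) (fun ab => fst ab = a /\ a < snd ab).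
Proof.
  apply Filter_prod with (fun x => x = a) (fun b => a < b).
  - reflexivity.
  - exists a. auto.
  - auto.
Qed.

Lemma is_RInt_gen_ext_gt (f g : R -> R) (a v : R) :
  (forall x, a < x -> f x = g x) ->
  is_RInt_gen f (at_point a) (Rbar_locally p_infty) v ->
  is_RInt_gen g (at_point a) (Rbar_locally p_infty) v.
Proof.
  intros Hfg. apply is_RInt_gen_ext.
  eapply filter_imp; [|apply filter_prod_at_point_p_infty].
  intros [u b] [Hu Hb] x Hx. simpl in *. subst u.
  rewrite Rmin_left in Hx by lra. apply Hfg. lra.
Qed.

Lemma is_RInt_gen_antiderivative (F f : R -> R) (a0 a L : R) :
  a0 < a ->
  (forall x, a0 < x -> is_derive F x (f x)) ->
  (forall x, a0 < x -> continuous f x) ->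
  filterlim F (Rbar_locally p_infty) (locally L) ->
  is_RInt_gen f (at_point a) (Rbar_locally p_infty) (L - F a).
Proof.
  intros Ha HF Hf HL.
  assert (Hsegment : forall P : R -> Prop, (forall x, a0 < x -> P x) ->
    filter_prod (at_point a) (Rbar_locally p_infty)
      (fun ab => forall x, Rmin (fst ab) (snd ab) <= x <= Rmax (fst ab) (snd ab) -> P x)).
  { intros P HP. eapply filter_imp; [|apply filter_prod_at_point_p_infty].
    intros [u b] [Hu Hb] x Hx. simpl in *. subst u.
    rewrite Rmin_left in Hx by lra. apply HP. lra. }
  apply (is_RInt_gen_ext_gt (Derive F)).
  { intros x Hx. apply is_derive_unique, HF. lra. }
  apply is_RInt_gen_Derive.
  - apply Hsegment. intros x Hx. eexists. now apply HF.
  - apply Hsegment. intros x Hx.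
    apply continuous_ext_loc with f; [|now apply Hf].
    apply filter_imp with (fun u => a0 < u); [|now apply open_gt].
    intros u Hu. symmetry. now apply is_derive_unique, HF.
  - intros P HP. unfold filtermap, at_point. now apply locally_singleton.
  - exact HL.
Qed.

Lemma continuous_of_ex_derive (f : R -> R) x : ex_derive f x -> continuous f x.
Proof. apply (ex_derive_continuous (K := R_AbsRing) (V := R_NormedModule)). Qed.

Lemma Derive_eta (f : R -> R) x l : is_derive f x l -> Derive (fun y => f y) x = l.
Proof. apply is_derive_unique. Qed.

Lemma filterlim_p_infty_0_of_bound (g : R -> R) (K T : R) :
  (forall t, T < t -> Rabs (g t) <= K / t) ->
  filterlim g (Rbar_locally p_infty) (locally 0).
Proof.
  intros Hg.
  assert (HK : is_lim (fun t => K / t) p_infty 0).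
  { replace (Finite 0) with (Rbar_mult K (Rbar_inv p_infty)) by (simpl; f_equal; ring).
    apply is_lim_scal_l, is_lim_inv; [apply is_lim_id | discriminate]. }
  apply (filterlim_le_le (fun t => - (K / t)) g (fun t => K / t) 0).
  - exists T. intros t Ht. apply Rabs_le_between, Hg, Ht.
  - replace (Finite 0) with (Rbar_opp 0) by (simpl; f_equal; ring).
    exact (is_lim_opp _ p_infty 0 HK).
  - exact HK.
Qed.

Definition poly_bounded (h : R -> R) : Prop :=
  exists (k : nat) (M : R), forall x, 1 <= x -> Rabs (h x) <= M * x ^ k.

Lemma poly_bounded_const c : poly_bounded (fun _ => c).
Proof. exists O, (Rabs c). intros x _. simpl. lra. Qed.

Lemma poly_bounded_pow n : poly_bounded (fun x => x ^ n).
Proof.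
  exists n, 1. intros x Hx. rewrite Rabs_pos_eq by (apply pow_le; lra). lra.
Qed.

Lemma poly_bounded_inv_pow n : poly_bounded (fun x => / x ^ n).
Proof.
  exists O, 1. intros x Hx. simpl.
  assert (1 <= x ^ n) by (apply pow_R1_Rle; lra).
  rewrite Rabs_pos_eq by (left; apply Rinv_0_lt_compat; lra).
  rewrite Rmult_1_r, <- Rinv_1. apply Rinv_le_contravar; lra.
Qed.

Lemma poly_bounded_inv : poly_bounded (fun x => / x).
Proof.
  destruct (poly_bounded_inv_pow 1) as [k [M HM]]. exists k, M.
  intros x Hx. rewrite <- (pow_1 x) at 1. now apply HM.
Qed.

Lemma poly_bounded_plus f g :
  poly_bounded f -> poly_bounded g -> poly_bounded (fun x => f x + g x).
Proof.
  intros [k1 [M1 H1]] [k2 [M2 H2]]. exists (k1 + k2)%nat, (Rabs M1 + Rabs M2).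
  intros x Hx. specialize (H1 x Hx). specialize (H2 x Hx).
  assert (Hle : forall k M, (k <= k1 + k2)%nat -> M * x ^ k <= Rabs M * x ^ (k1 + k2)).
  { intros k M Hk. apply Rle_trans with (Rabs M * x ^ k).
    - apply Rmult_le_compat_r; [apply pow_le; lra | apply Rle_abs].
    - apply Rmult_le_compat_l; [apply Rabs_pos | apply Rle_pow; [lra | exact Hk]]. }
  pose proof (Rabs_triang (f x) (g x)).
  pose proof (Hle k1 M1 ltac:(lia)). pose proof (Hle k2 M2 ltac:(lia)). lra.
Qed.

Lemma poly_bounded_opp f : poly_bounded f -> poly_bounded (fun x => - f x).
Proof. intros [k [M H]]. exists k, M. intros x Hx. rewrite Rabs_Ropp. auto. Qed.

Lemma poly_bounded_minus f g :
  poly_bounded f -> poly_bounded g -> poly_bounded (fun x => f x - g x).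
Proof. intros. apply poly_bounded_plus; [|apply poly_bounded_opp]; assumption. Qed.

Lemma poly_bounded_mult f g :
  poly_bounded f -> poly_bounded g -> poly_bounded (fun x => f x * g x).
Proof.
  intros [k1 [M1 H1]] [k2 [M2 H2]]. exists (k1 + k2)%nat, (M1 * M2).
  intros x Hx. rewrite Rabs_mult, pow_add.
  replace (M1 * M2 * (x ^ k1 * x ^ k2)) with ((M1 * x ^ k1) * (M2 * x ^ k2)) by ring.
  apply Rmult_le_compat; auto using Rabs_pos.
Qed.

Lemma pow_le_fact_mul_exp n t : 0 <= t -> t ^ n <= INR (fact n) * exp t.
Proof.
  intros Ht. pose proof (exp_ge_taylor t n Ht) as Htaylor.
  assert (Hfact : 0 < INR (fact n)) by apply INR_fact_lt_0.
  destruct n as [|n].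
  - simpl in *. lra.
  - rewrite tech5 in Htaylor.
    assert (0 <= sum_f_R0 (fun k => t ^ k / INR (fact k)) n).
    { apply cond_pos_sum. intros k. apply Rdiv_le_0_compat;
        [apply pow_le; lra | apply INR_fact_lt_0]. }
    assert (Hlast : t ^ S n / INR (fact (S n)) <= exp t) by lra.
    apply Rmult_le_compat_r with (r := INR (fact (S n))) in Hlast; [|lra].
    unfold Rdiv in Hlast. rewrite Rmult_assoc, Rinv_l, Rmult_1_r in Hlast by lra. lra.
Qed.

Lemma filterlim_poly_bounded_mul_exp_opp h :
  poly_bounded h -> filterlim (fun x => h x * exp (- x)) (Rbar_locally p_infty) (locally 0).
Proof.
  intros [k [M HM]].
  apply filterlim_p_infty_0_of_bound with (Rabs M * INR (fact (S k))) 1.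
  intros t Ht.
  pose proof (pow_le_fact_mul_exp (S k) t ltac:(lra)) as Hpow. simpl pow in Hpow.
  assert (0 < exp t) by apply exp_pos.
  rewrite Rabs_mult, (Rabs_pos_eq (exp (- t))), exp_Ropp by (left; apply exp_pos).
  apply Rle_trans with (Rabs M * t ^ k * / exp t).
  { apply Rmult_le_compat_r; [left; now apply Rinv_0_lt_compat|].
    eapply Rle_trans; [now apply HM; lra|].
    apply Rmult_le_compat_r; [apply pow_le; lra | apply Rle_abs]. }
  apply (Rmult_le_reg_r (exp t * t)); [nra|].
  replace (Rabs M * t ^ k * / exp t * (exp t * t)) with (Rabs M * (t * t ^ k)) by (field; lra).
  replace (Rabs M * INR (fact (S k)) / t * (exp t * t))
    with (Rabs M * (INR (fact (S k)) * exp t)) by (field; lra).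
  apply Rmult_le_compat_l; [apply Rabs_pos | exact Hpow].
Qed.

Lemma exp_le_compat x y : x <= y -> exp x <= exp y.
Proof. intros [Hxy | ->]; [left; now apply exp_increasing | lra]. Qed.

Definition gauss (c : R) : R := RInt (fun w => exp (- (w * w))) 0 c.

Lemma ex_RInt_gauss a b : ex_RInt (fun w => exp (- (w * w))) a b.
Proof.
  apply (ex_RInt_continuous (V := R_CompleteNormedModule)).
  intros w _. apply continuous_of_ex_derive. auto_derive. exact I.
Qed.

Lemma is_derive_gauss c : is_derive gauss c (exp (- (c * c))).
Proof.
  apply (is_derive_RInt (fun w => exp (- (w * w))) gauss 0 c).
  - apply filter_forall. intros b. exact (RInt_correct _ _ _ (ex_RInt_gauss 0 b)).
  - apply continuous_of_ex_derive. auto_derive. exact I.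
Qed.

Lemma gauss_increment_bounds u v : 1 <= u <= v -> 0 <= gauss v - gauss u <= exp (- u).
Proof.
  intros Huv.
  assert (Hdiff : gauss v - gauss u = RInt (fun w => exp (- (w * w))) u v).
  { unfold gauss. rewrite <- (RInt_Chasles _ 0 u v) by apply ex_RInt_gauss.
    unfold plus; simpl. ring. }
  assert (Hexp : is_RInt (fun w => exp (- w)) u v (minus (- exp (- v)) (- exp (- u)))).
  { apply (is_RInt_derive (fun w => - exp (- w))).
    - intros w _. auto_derive; [exact I | ring].
    - intros w _. apply continuous_of_ex_derive. auto_derive. exact I. }
  rewrite Hdiff. split.
  - apply RInt_ge_0; [lra | apply ex_RInt_gauss |].
    intros w _. left. apply exp_pos.
  - apply Rle_trans with (RInt (fun w => exp (- w)) u v).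
    + apply RInt_le; [lra | apply ex_RInt_gauss | eexists; exact Hexp |].
      intros w Hw. apply exp_le_compat. nra.
    + rewrite (is_RInt_unique _ _ _ _ Hexp). unfold minus, plus, opp; simpl.
      pose proof (exp_pos (- v)). lra.
Qed.

Lemma ex_finite_lim_gauss : ex_finite_lim gauss p_infty.
Proof.
  apply (filterlim_locally_cauchy (U := R_CompleteSpace) (F := Rbar_locally p_infty)).
  intros [e He]. set (T := Rmax 1 (1 - ln e)).
  assert (Hclose : forall u v, T < u -> u <= v -> Rabs (gauss v - gauss u) < e).
  { intros u v Hu Huv. pose proof (Rmax_l 1 (1 - ln e)). pose proof (Rmax_r 1 (1 - ln e)).
    destruct (gauss_increment_bounds u v) as [Hlo Hhi]; [unfold T in *; lra|].
    rewrite Rabs_pos_eq by lra. eapply Rle_lt_trans; [exact Hhi|].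
    rewrite <- (exp_ln e He). apply exp_increasing. unfold T in *. lra. }
  exists (fun t => T < t). split; [now exists T|].
  intros u v Hu Hv. change (Rabs (gauss v - gauss u) < e).
  destruct (Rle_dec u v).
  - now apply Hclose.
  - rewrite Rabs_minus_sym. apply Hclose; [exact Hv | lra].
Qed.

Definition gauss_integral : R := real (Lim gauss p_infty).

Lemma gauss_integral_lim : filterlim gauss (Rbar_locally p_infty) (locally gauss_integral).
Proof.
  destruct ex_finite_lim_gauss as [G HG]. unfold gauss_integral.
  now rewrite (is_lim_unique gauss p_infty G HG).
Qed.

Lemma gauss_integral_pos : 0 < gauss_integral.
Proof.
  assert (H1 : exp (-1) <= gauss 1).
  { replace (exp (-1)) with (RInt (fun _ => exp (-1)) 0 1)
      by (rewrite RInt_const; unfold scal; simpl; unfold mult; simpl; ring).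
    apply RInt_le; [lra | apply ex_RInt_const | apply ex_RInt_gauss |].
    intros w Hw. apply exp_le_compat. nra. }
  assert (H2 : Rbar_le (gauss 1) gauss_integral).
  { apply (filterlim_le (F := Rbar_locally p_infty) (fun _ => gauss 1) gauss);
      [| apply filterlim_const | apply gauss_integral_lim].
    exists 1. intros t Ht. destruct (gauss_increment_bounds 1 t); lra. }
  simpl in H2.
  pose proof (exp_pos (-1)). lra.
Qed.

Definition bessel_K_half (x : R) : R := exp (- x) * sqrt (2 / x) * gauss_integral.

Lemma cosh_eq_1_plus_sinh_half t : cosh t = 1 + 2 * sinh (t / 2) ^ 2.
Proof.
  assert (E1 : exp t = exp (t / 2) * exp (t / 2)) by (rewrite <- exp_plus; f_equal; field).
  assert (E2 : exp (- t) = exp (- (t / 2)) * exp (- (t / 2)))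
    by (rewrite <- exp_plus; f_equal; field).
  assert (E3 : exp (t / 2) * exp (- (t / 2)) = 1)
    by (rewrite <- exp_plus, Rplus_opp_r; apply exp_0).
  unfold cosh, sinh. rewrite E1, E2. nra.
Qed.

Lemma sinh_ge_half u : 0 <= u -> u / 2 <= sinh u.
Proof.
  intros Hu. unfold sinh. pose proof (exp_ineq1_le u).
  assert (exp (- u) <= 1) by (rewrite <- exp_0; apply exp_le_compat; lra). lra.
Qed.

Lemma filterlim_mul_sinh_half_p_infty r : 0 < r ->
  filterlim (fun t => r * sinh (t / 2)) (Rbar_locally p_infty) (Rbar_locally p_infty).
Proof.
  intros Hr P [M HM]. exists (Rmax 0 (4 * M / r)). intros t Ht. apply HM.
  pose proof (Rmax_l 0 (4 * M / r)). pose proof (Rmax_r 0 (4 * M / r)).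
  pose proof (sinh_ge_half (t / 2) ltac:(lra)).
  apply Rlt_le_trans with (r / 4 * t).
  - replace M with (r / 4 * (4 * M / r)) by (field; lra).
    apply Rmult_lt_compat_l; lra.
  - replace (r / 4 * t) with (r * (t / 4)) by field.
    apply Rmult_le_compat_l; lra.
Qed.

Lemma is_RInt_gen_bessel_K_half x : 0 < x ->
  is_RInt_gen (fun t => exp (- x * cosh t) * cosh (t / 2))
    (at_point 0) (Rbar_locally p_infty) (bessel_K_half x).
Proof.
  intros Hx.
  set (r := sqrt (2 * x)).
  assert (Hr : 0 < r) by (apply sqrt_lt_R0; lra).
  assert (Hrr : r * r = 2 * x) by (apply sqrt_sqrt; lra).
  assert (Hroot : sqrt (2 / x) * r = 2).
  { unfold r. rewrite <- sqrt_mult_alt by (apply Rlt_le, Rdiv_lt_0_compat; lra).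
    replace (2 / x * (2 * x)) with (2 * 2) by (field; lra). apply sqrt_square. lra. }
  (* the substitution w = r sinh (t/2) turns x cosh t into x + w^2 *)
  set (s := fun t => r * sinh (t / 2)).
  set (c := exp (- x) * sqrt (2 / x)).
  replace (bessel_K_half x) with (c * gauss_integral - c * gauss (s 0)).
  2:{ unfold s, gauss. replace (0 / 2) with 0 by field. rewrite sinh_0, Rmult_0_r, RInt_point.
      unfold bessel_K_half, c, zero; simpl. ring. }
  apply (is_RInt_gen_antiderivative (fun t => c * gauss (s t)) _ (-1)); [lra | | |].
  - intros t _.
    replace (exp (- x * cosh t) * cosh (t / 2))
      with (c * (r * cosh (t / 2) / 2 * exp (- (s t * s t)))).
    + apply (is_derive_scal (fun t => gauss (s t))).
      apply (is_derive_comp gauss s); [apply is_derive_gauss |].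
      unfold s, sinh, cosh. auto_derive; [exact I | unfold Rdiv; ring].
    + unfold c. rewrite (cosh_eq_1_plus_sinh_half t).
      replace (- x * (1 + 2 * sinh (t / 2) ^ 2)) with (- x + - (s t * s t))
        by (unfold s; replace (r * sinh (t / 2) * (r * sinh (t / 2)))
              with (r * r * sinh (t / 2) ^ 2) by ring; rewrite Hrr; ring).
      rewrite exp_plus.
      replace (sqrt (2 / x)) with (2 / r) by (field_simplify_eq; lra). field. lra.
  - intros t _. apply continuous_of_ex_derive. unfold cosh. auto_derive. exact I.
  - apply (filterlim_comp _ _ _ (fun t => gauss (s t)) (fun g => c * g) _ (locally gauss_integral)).
    + apply (filterlim_comp _ _ _ s gauss _ (Rbar_locally p_infty));
        [now apply filterlim_mul_sinh_half_p_infty | apply gauss_integral_lim].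
    + apply (continuous_of_ex_derive (fun g => c * g)). auto_derive. exact I.
Qed.

Lemma cosh_succ_mul nu t :
  cosh ((nu + 1) * t) = cosh ((nu - 1) * t) + 2 * sinh (nu * t) * sinh t.
Proof.
  replace ((nu + 1) * t) with (nu * t + t) by ring.
  replace ((nu - 1) * t) with (nu * t + - t) by ring.
  unfold cosh, sinh. rewrite !Ropp_plus_distr, !exp_plus, Ropp_involutive. field.
Qed.

Lemma filterlim_sinh_mul_exp_cosh x nu : 0 < x -> 0 <= nu ->
  filterlim (fun t => sinh (nu * t) * exp (- x * cosh t)) (Rbar_locally p_infty) (locally 0).
Proof.
  intros Hx Hnu.
  apply filterlim_p_infty_0_of_bound with 1 (Rmax 1 (4 * (nu + 1) / x)).
  intros t Ht. pose proof (Rmax_l 1 (4 * (nu + 1) / x)). pose proof (Rmax_r 1 (4 * (nu + 1) / x)).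
  assert (Hxt : 4 * (nu + 1) < x * t).
  { replace (4 * (nu + 1)) with (x * (4 * (nu + 1) / x)) by (field; lra).
    apply Rmult_lt_compat_l; lra. }
  assert (Hcosh : t * t / 4 <= cosh t).
  { pose proof (pow_le_fact_mul_exp 2 t ltac:(lra)). simpl in *.
    unfold cosh. pose proof (exp_pos (- t)). lra. }
  assert (Hsinh : 0 <= sinh (nu * t) <= exp (nu * t)).
  { unfold sinh. pose proof (exp_pos (- (nu * t))).
    assert (exp (- (nu * t)) <= exp (nu * t)) by (apply exp_le_compat; nra). lra. }
  rewrite Rabs_pos_eq by (apply Rmult_le_pos; [lra | left; apply exp_pos]).
  apply Rle_trans with (exp (nu * t) * exp (- x * cosh t)).
  { apply Rmult_le_compat_r; [left; apply exp_pos | lra]. }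
  rewrite <- exp_plus. apply Rle_trans with (exp (- t)); [apply exp_le_compat; nra|].
  rewrite exp_Ropp. unfold Rdiv. rewrite Rmult_1_l.
  apply Rinv_le_contravar; [lra|]. pose proof (exp_ineq1_le t). lra.
Qed.

Lemma is_RInt_gen_sinh_mul_sinh x nu B : 0 < x -> 0 <= nu ->
  is_RInt_gen (fun t => exp (- x * cosh t) * cosh (nu * t))
    (at_point 0) (Rbar_locally p_infty) B ->
  is_RInt_gen (fun t => exp (- x * cosh t) * (sinh (nu * t) * sinh t))
    (at_point 0) (Rbar_locally p_infty) (nu / x * B).
Proof.
  intros Hx Hnu HB.
  set (w := fun t => sinh (nu * t) * exp (- x * cosh t)).
  set (dw := fun t => nu * (exp (- x * cosh t) * cosh (nu * t))
                      - x * (exp (- x * cosh t) * (sinh (nu * t) * sinh t))).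
  assert (Hdw : is_RInt_gen dw (at_point 0) (Rbar_locally p_infty) (0 - w 0)).
  { apply (is_RInt_gen_antiderivative w dw (-1)); [lra | | |].
    - intros t _. unfold w, dw, sinh, cosh. auto_derive; [exact I | unfold Rdiv; ring].
    - intros t _. apply continuous_of_ex_derive. unfold dw, sinh, cosh. auto_derive. exact I.
    - now apply filterlim_sinh_mul_exp_cosh. }
  replace (0 - w 0) with 0 in Hdw by (unfold w; rewrite Rmult_0_r, sinh_0; ring).
  apply (is_RInt_gen_ext_gt
    (fun t => minus (scal (nu / x) (exp (- x * cosh t) * cosh (nu * t))) (scal (/ x) (dw t)))).
  { intros t _. unfold dw, minus, plus, opp, scal; simpl; unfold mult; simpl. field. lra. }
  replace (nu / x * B) with (minus (scal (nu / x) B) (scal (/ x) 0))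
    by (unfold minus, plus, opp, scal; simpl; unfold mult; simpl; ring).
  exact (is_RInt_gen_minus _ _ _ _ (is_RInt_gen_scal _ (nu / x) _ HB)
    (is_RInt_gen_scal _ (/ x) _ Hdw)).
Qed.

Lemma is_RInt_gen_bessel_K_recurrence x nu A B : 0 < x -> 0 <= nu ->
  is_RInt_gen (fun t => exp (- x * cosh t) * cosh ((nu - 1) * t))
    (at_point 0) (Rbar_locally p_infty) A ->
  is_RInt_gen (fun t => exp (- x * cosh t) * cosh (nu * t))
    (at_point 0) (Rbar_locally p_infty) B ->
  is_RInt_gen (fun t => exp (- x * cosh t) * cosh ((nu + 1) * t))
    (at_point 0) (Rbar_locally p_infty) (A + 2 * nu / x * B).
Proof.
  intros Hx Hnu HA HB.
  apply (is_RInt_gen_ext_gt (fun t => plus (exp (- x * cosh t) * cosh ((nu - 1) * t))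
           (scal 2 (exp (- x * cosh t) * (sinh (nu * t) * sinh t))))).
  { intros t _. rewrite cosh_succ_mul. unfold plus, scal; simpl; unfold mult; simpl. ring. }
  replace (A + 2 * nu / x * B) with (plus A (scal 2 (nu / x * B)))
    by (unfold plus, scal; simpl; unfold mult; simpl; field; lra).
  exact (is_RInt_gen_plus _ _ _ _ HA
    (is_RInt_gen_scal _ 2 _ (is_RInt_gen_sinh_mul_sinh x nu B Hx Hnu HB))).
Qed.

(* [bessel_poly_pair n x = (q_(n-1) x, q_n x)] where [K_(n+1/2) = K_(1/2) q_n]; the
   first component starts at [q_(-1) = q_0 = 1] because [K_(-1/2) = K_(1/2)]. *)
Fixpoint bessel_poly_pair (n : nat) (x : R) : R * R :=
  match n with
  | O => (1, 1)
  | S m => (snd (bessel_poly_pair m x),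
            fst (bessel_poly_pair m x) + (2 * INR m + 1) / x * snd (bessel_poly_pair m x))
  end.

Definition bessel_poly (n : nat) (x : R) : R := snd (bessel_poly_pair n x).

Lemma is_RInt_gen_bessel_K_pair x n : 0 < x ->
  is_RInt_gen (fun t => exp (- x * cosh t) * cosh ((INR n + / 2 - 1) * t))
    (at_point 0) (Rbar_locally p_infty) (bessel_K_half x * fst (bessel_poly_pair n x)) /\
  is_RInt_gen (fun t => exp (- x * cosh t) * cosh ((INR n + / 2) * t))
    (at_point 0) (Rbar_locally p_infty) (bessel_K_half x * bessel_poly n x).
Proof.
  intros Hx. unfold bessel_poly.
  induction n as [|n [IHfst IHsnd]]; cbn [bessel_poly_pair fst snd].
  - rewrite Rmult_1_r. split.
    + apply (is_RInt_gen_ext_gt (fun t => exp (- x * cosh t) * cosh (t / 2))).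
      { intros t _. simpl INR. replace ((0 + / 2 - 1) * t) with (- (t / 2)) by field.
        unfold cosh. rewrite Ropp_involutive. field. }
      now apply is_RInt_gen_bessel_K_half.
    + apply (is_RInt_gen_ext_gt (fun t => exp (- x * cosh t) * cosh (t / 2))).
      { intros t _. simpl INR. now replace ((0 + / 2) * t) with (t / 2) by field. }
      now apply is_RInt_gen_bessel_K_half.
  - rewrite S_INR.
    replace (INR n + 1 + / 2 - 1) with (INR n + / 2) by ring.
    replace (INR n + 1 + / 2) with (INR n + / 2 + 1) by ring.
    split; [exact IHsnd|].
    replace (bessel_K_half x * (fst (bessel_poly_pair n x)
               + (2 * INR n + 1) / x * snd (bessel_poly_pair n x)))
      with (bessel_K_half x * fst (bessel_poly_pair n x)
            + 2 * (INR n + / 2) / x * (bessel_K_half x * snd (bessel_poly_pair n x)))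
      by (field; lra).
    apply is_RInt_gen_bessel_K_recurrence; [exact Hx | | exact IHfst | exact IHsnd].
    pose proof (pos_INR n). lra.
Qed.

Lemma BesselK_half_integer n x : 0 < x ->
  BesselK (INR n + / 2) x = bessel_K_half x * bessel_poly n x.
Proof.
  intros Hx. apply is_RInt_gen_unique. apply (is_RInt_gen_bessel_K_pair x n Hx).
Qed.

Lemma bessel_poly_pair_pos n x : 0 < x ->
  0 < fst (bessel_poly_pair n x) /\ 0 < snd (bessel_poly_pair n x).
Proof.
  intros Hx. induction n as [|n [IHfst IHsnd]]; cbn [bessel_poly_pair fst snd]; [lra|].
  split; [exact IHsnd|].
  assert (0 < (2 * INR n + 1) / x) by (apply Rdiv_lt_0_compat; pose proof (pos_INR n); lra).
  nra.
Qed.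

Lemma bessel_poly_pos n x : 0 < x -> 0 < bessel_poly n x.
Proof. intros Hx. apply (bessel_poly_pair_pos n x Hx). Qed.

Lemma bessel_poly_pair_derive n x : 0 < x ->
  is_derive (fun y => fst (bessel_poly_pair n y)) x
    (fst (bessel_poly_pair n x) - snd (bessel_poly_pair n x)
     + INR n / x * fst (bessel_poly_pair n x)) /\
  is_derive (fun y => snd (bessel_poly_pair n y)) x
    (snd (bessel_poly_pair n x) - fst (bessel_poly_pair n x)
     - INR n / x * snd (bessel_poly_pair n x)).
Proof.
  intros Hx. induction n as [|n [IHfst IHsnd]]; cbn [bessel_poly_pair fst snd].
  - split; auto_derive; auto; simpl; field; lra.
  - rewrite S_INR. split.
    + replace (snd (bessel_poly_pair n x)
                 - (fst (bessel_poly_pair n x) + (2 * INR n + 1) / x * snd (bessel_poly_pair n x))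
                 + (INR n + 1) / x * snd (bessel_poly_pair n x))
        with (snd (bessel_poly_pair n x) - fst (bessel_poly_pair n x)
              - INR n / x * snd (bessel_poly_pair n x)) by (field; lra).
      exact IHsnd.
    + set (a := fun y => fst (bessel_poly_pair n y)).
      set (b := fun y => snd (bessel_poly_pair n y)).
      assert (Ha : is_derive a x (a x - b x + INR n / x * a x)) by exact IHfst.
      assert (Hb : is_derive b x (b x - a x - INR n / x * b x)) by exact IHsnd.
      change (is_derive (fun y => a y + (2 * INR n + 1) / y * b y) x
        (a x + (2 * INR n + 1) / x * b x - b x
         - (INR n + 1) / x * (a x + (2 * INR n + 1) / x * b x))).
      clearbody a b.
      auto_derive; [repeat split; try (eexists; eassumption); lra|].
      rewrite (Derive_eta _ _ _ Ha), (Derive_eta _ _ _ Hb). field. lra.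
Qed.

Lemma is_derive_bessel_poly n x : 0 < x ->
  is_derive (bessel_poly n) x
    (bessel_poly n x - bessel_poly (S n) x + INR (S n) / x * bessel_poly n x).
Proof. intros Hx. apply (bessel_poly_pair_derive (S n) x Hx). Qed.

Lemma is_derive_bessel_poly_succ n x : 0 < x ->
  is_derive (bessel_poly (S n)) x
    (bessel_poly (S n) x - bessel_poly n x - INR (S n) / x * bessel_poly (S n) x).
Proof. intros Hx. apply (bessel_poly_pair_derive (S n) x Hx). Qed.

Lemma poly_bounded_bessel_poly n : poly_bounded (bessel_poly n).
Proof.
  enough (poly_bounded (fun x => fst (bessel_poly_pair n x))
          /\ poly_bounded (fun x => snd (bessel_poly_pair n x))) by easy.
  induction n as [|n [IHfst IHsnd]]; cbn [bessel_poly_pair fst snd].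
  - split; apply poly_bounded_const.
  - split; [exact IHsnd|].
    apply poly_bounded_plus; [exact IHfst|].
    apply poly_bounded_mult; [|exact IHsnd].
    apply (poly_bounded_mult (fun _ => 2 * INR n + 1));
      [apply poly_bounded_const | apply poly_bounded_inv].
Qed.

(* [gauss_integral = sqrt PI / 2], so [H0_scale = 1]; only its positivity is needed. *)
Definition H0_scale : R := sqrt (2 / PI) * sqrt 2 * gauss_integral.

Lemma H0_scale_pos : 0 < H0_scale.
Proof.
  unfold H0_scale. pose proof PI_RGT_0. pose proof gauss_integral_pos.
  repeat apply Rmult_lt_0_compat; try apply sqrt_lt_R0; try apply Rdiv_lt_0_compat; lra.
Qed.

Lemma H0_eq_bessel_poly l x : 0 < x -> H0 l x = H0_scale * bessel_poly l x.
Proof.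
  intros Hx. unfold H0, H0_scale. rewrite BesselK_half_integer by exact Hx.
  unfold bessel_K_half. rewrite exp_Ropp.
  assert (Hsqrt : sqrt x * sqrt (2 / x) = sqrt 2).
  { rewrite <- sqrt_mult_alt by lra. f_equal. field. lra. }
  rewrite <- Hsqrt. pose proof (exp_pos x). field. lra.
Qed.

Lemma is_RInt_gen_mul_wronskian (V y p g q : R -> R) (a z : R) :
  a < z ->
  (forall x, a < x -> is_derive y x (p x)) ->
  (forall x, a < x -> is_derive p x ((1 + V x) * y x)) ->
  (forall x, a < x -> is_derive g x (q x)) ->
  (forall x, a < x -> is_derive q x (V x * g x)) ->
  filterlim (fun x => g x * p x - q x * y x) (Rbar_locally p_infty) (locally 0) ->
  is_RInt_gen (fun x => g x * y x) (at_point z) (Rbar_locally p_infty)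
    (q z * y z - g z * p z).
Proof.
  intros Haz Hy Hp Hg Hq Hlim.
  replace (q z * y z - g z * p z) with (0 - (g z * p z - q z * y z)) by ring.
  apply (is_RInt_gen_antiderivative (fun x => g x * p x - q x * y x) _ a);
    [exact Haz | | | exact Hlim].
  - intros x Hx.
    replace (g x * y x) with (q x * p x + g x * ((1 + V x) * y x) - (V x * g x * y x + q x * p x))
      by ring.
    exact (is_derive_minus _ _ _ _ _
             (is_derive_mult _ _ _ _ _ (Hg x Hx) (Hp x Hx) Rmult_comm)
             (is_derive_mult _ _ _ _ _ (Hq x Hx) (Hy x Hx) Rmult_comm)).
  - intros x Hx. apply continuous_of_ex_derive.
    auto_derive. repeat split; eexists; [apply Hg | apply Hy]; exact Hx.
Qed.

Definition euler_sol (l : nat) (A B x : R) : R := A * x ^ S l + B / x ^ l.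

Definition euler_sol_deriv (l : nat) (A B x : R) : R :=
  euler_sol l (INR (S l) * A) (- INR l * B) x / x.

Lemma is_derive_euler_sol l A B x : 0 < x ->
  is_derive (euler_sol l A B) x (euler_sol_deriv l A B x).
Proof.
  intros Hx. assert (Hpow : forall n, x ^ n <> 0) by (intros; apply pow_nonzero; lra).
  unfold euler_sol_deriv, euler_sol. auto_derive; [apply Hpow|].
  destruct l; simpl pow; rewrite ?S_INR; simpl INR; field; repeat split; auto; lra.
Qed.

Lemma is_derive_euler_sol_deriv l A B x : 0 < x ->
  is_derive (euler_sol_deriv l A B) x (INR l * INR (S l) / x ^ 2 * euler_sol l A B x).
Proof.
  intros Hx. assert (Hpow : forall n, x ^ n <> 0) by (intros; apply pow_nonzero; lra).
  unfold euler_sol_deriv, euler_sol. auto_derive; [repeat split; auto; lra|].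
  destruct l; simpl pow; rewrite ?S_INR; simpl INR; field; repeat split; auto; lra.
Qed.

Lemma poly_bounded_euler_sol l A B : poly_bounded (euler_sol l A B).
Proof.
  unfold euler_sol. apply poly_bounded_plus.
  - apply (poly_bounded_mult (fun _ => A)); [apply poly_bounded_const | apply poly_bounded_pow].
  - apply (poly_bounded_mult (fun _ => B)); [apply poly_bounded_const | apply poly_bounded_inv_pow].
Qed.

Lemma poly_bounded_euler_sol_deriv l A B : poly_bounded (euler_sol_deriv l A B).
Proof.
  unfold euler_sol_deriv.
  apply poly_bounded_mult; [apply poly_bounded_euler_sol | apply poly_bounded_inv].
Qed.

Definition bessel_sol (l : nat) (x : R) : R := exp (- x) * bessel_poly l x.

Definition bessel_sol_deriv (l : nat) (x : R) : R :=
  exp (- x) * (INR (S l) / x * bessel_poly l x - bessel_poly (S l) x).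

Lemma is_derive_bessel_sol l x : 0 < x -> is_derive (bessel_sol l) x (bessel_sol_deriv l x).
Proof.
  intros Hx. unfold bessel_sol, bessel_sol_deriv.
  auto_derive; [eexists; now apply is_derive_bessel_poly|].
  rewrite (Derive_eta _ _ _ (is_derive_bessel_poly l x Hx)). ring.
Qed.

Lemma is_derive_bessel_sol_deriv l x : 0 < x ->
  is_derive (bessel_sol_deriv l) x ((1 + INR l * INR (S l) / x ^ 2) * bessel_sol l x).
Proof.
  intros Hx. unfold bessel_sol, bessel_sol_deriv. rewrite S_INR.
  auto_derive.
  { repeat split; try lra; eexists;
      [apply is_derive_bessel_poly | apply is_derive_bessel_poly_succ]; exact Hx. }
  rewrite (Derive_eta _ _ _ (is_derive_bessel_poly l x Hx)),
    (Derive_eta _ _ _ (is_derive_bessel_poly_succ l x Hx)).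
  rewrite S_INR. field. lra.
Qed.

Lemma filterlim_euler_sol_bessel_sol_wronskian l A B :
  filterlim (fun x => euler_sol l A B x * bessel_sol_deriv l x
                      - euler_sol_deriv l A B x * bessel_sol l x)
    (Rbar_locally p_infty) (locally 0).
Proof.
  apply (filterlim_ext (fun x =>
    (euler_sol l A B x * (INR (S l) * / x * bessel_poly l x - bessel_poly (S l) x)
     - euler_sol_deriv l A B x * bessel_poly l x) * exp (- x))).
  { intros x. unfold bessel_sol, bessel_sol_deriv. unfold Rdiv. ring. }
  apply filterlim_poly_bounded_mul_exp_opp.
  pose proof (poly_bounded_bessel_poly l). pose proof (poly_bounded_bessel_poly (S l)).
  apply poly_bounded_minus; apply poly_bounded_mult;
    auto using poly_bounded_euler_sol, poly_bounded_euler_sol_deriv.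
  apply poly_bounded_minus; [|assumption].
  apply poly_bounded_mult; [|assumption].
  apply (poly_bounded_mult (fun _ => INR (S l)));
    [apply poly_bounded_const | apply poly_bounded_inv].
Qed.

Lemma is_RInt_gen_euler_sol_H0 l A B z : 0 < z ->
  is_RInt_gen (fun x => exp (- x + z) * euler_sol l A B x * (H0 l x / H0 l z))
    (at_point z) (Rbar_locally p_infty)
    (euler_sol_deriv l A B z
     - euler_sol l A B z * (INR (S l) / z - bessel_poly (S l) z / bessel_poly l z)).
Proof.
  intros Hz.
  pose proof (bessel_poly_pos l z Hz) as HQ. pose proof H0_scale_pos as Hscale.
  assert (Hwr := is_RInt_gen_mul_wronskian (fun x => INR l * INR (S l) / x ^ 2)
    (bessel_sol l) (bessel_sol_deriv l) (euler_sol l A B) (euler_sol_deriv l A B) 0 z Hz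
    (is_derive_bessel_sol l) (is_derive_bessel_sol_deriv l)
    (is_derive_euler_sol l A B) (is_derive_euler_sol_deriv l A B)
    (filterlim_euler_sol_bessel_sol_wronskian l A B)).
  apply (is_RInt_gen_ext_gt (fun x => exp z / bessel_poly l z
                                         * (euler_sol l A B x * bessel_sol l x))).
  { intros x Hx. rewrite !H0_eq_bessel_poly by lra. unfold bessel_sol.
    rewrite exp_plus. field. lra. }
  replace (euler_sol_deriv l A B z
           - euler_sol l A B z * (INR (S l) / z - bessel_poly (S l) z / bessel_poly l z))
    with (exp z / bessel_poly l z
          * (euler_sol_deriv l A B z * bessel_sol l z - euler_sol l A B z * bessel_sol_deriv l z)).
  - exact (is_RInt_gen_scal _ (exp z / bessel_poly l z) _ Hwr).
  - unfold bessel_sol, bessel_sol_deriv.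
    rewrite exp_Ropp. pose proof (exp_pos z). field. lra.
Qed.

Lemma G0_euler_sol_snd l z e : 0 < z -> 0 < e ->
  G0 l z e = euler_sol l (/ (z ^ l * (2 * INR l + 1))) (- z ^ S l / (2 * INR l + 1)) e.
Proof.
  intros Hz He. pose proof (pos_INR l) as Hl.
  assert (Hzl : z ^ l <> 0) by (apply pow_nonzero; lra).
  assert (Hel : e ^ l <> 0) by (apply pow_nonzero; lra).
  unfold G0, euler_sol. rewrite Nat.add_1_r. field. repeat split; lra.
Qed.

Lemma G0_euler_sol_fst l z e : 0 < z -> 0 < e ->
  G0 l z e = euler_sol l (- / (e ^ l * (2 * INR l + 1))) (e ^ S l / (2 * INR l + 1)) z.
Proof.
  intros Hz He. pose proof (pos_INR l) as Hl.
  assert (Hzl : z ^ l <> 0) by (apply pow_nonzero; lra).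
  assert (Hel : e ^ l <> 0) by (apply pow_nonzero; lra).
  unfold G0, euler_sol. rewrite Nat.add_1_r. field. repeat split; lra.
Qed.

Lemma Derive_G0_fst l z e : 0 < z -> 0 < e ->
  Derive (fun z => G0 l z e) z
  = euler_sol l (- INR l / (z ^ S l * (2 * INR l + 1))) (- INR (S l) * z ^ l / (2 * INR l + 1)) e.
Proof.
  intros Hz He.
  rewrite (is_derive_unique _ _ (euler_sol_deriv l (- / (e ^ l * (2 * INR l + 1)))
                                   (e ^ S l / (2 * INR l + 1)) z)).
  - pose proof (pos_INR l) as Hl.
    assert (Hzl : z ^ l <> 0) by (apply pow_nonzero; lra).
    assert (Hel : e ^ l <> 0) by (apply pow_nonzero; lra).
    unfold euler_sol_deriv, euler_sol. simpl pow. field. repeat split; lra.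
  - apply is_derive_ext_loc with (euler_sol l (- / (e ^ l * (2 * INR l + 1)))
                                    (e ^ S l / (2 * INR l + 1))).
    + apply filter_imp with (fun u => 0 < u); [|now apply open_gt].
      intros u Hu. symmetry. now apply G0_euler_sol_fst.
    + now apply is_derive_euler_sol.
Qed.

Lemma Derive_H0 l z : 0 < z ->
  Derive (H0 l) z = H0_scale
    * (bessel_poly l z - bessel_poly (S l) z + INR (S l) / z * bessel_poly l z).
Proof.
  intros Hz. apply is_derive_unique.
  apply is_derive_ext_loc with (fun x => H0_scale * bessel_poly l x).
  - apply filter_imp with (fun u => 0 < u); [|now apply open_gt].
    intros u Hu. symmetry. now apply H0_eq_bessel_poly.
  - exact (is_derive_scal _ _ H0_scale _ (is_derive_bessel_poly l z Hz)).
Qed.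

Lemma is_RInt_gen_G0_H0 l z : 0 < z ->
  is_RInt_gen (fun e => exp (- e + z) * G0 l z e * (H0 l e / H0 l z))
    (at_point z) (Rbar_locally p_infty) 1.
Proof.
  intros Hz. pose proof (pos_INR l) as Hl.
  assert (Hzl : z ^ l <> 0) by (apply pow_nonzero; lra).
  set (A := / (z ^ l * (2 * INR l + 1))). set (B := - z ^ S l / (2 * INR l + 1)).
  apply (is_RInt_gen_ext_gt (fun e => exp (- e + z) * euler_sol l A B e * (H0 l e / H0 l z))).
  { intros e He. now rewrite G0_euler_sol_snd by lra. }
  replace 1 with (euler_sol_deriv l A B z
    - euler_sol l A B z * (INR (S l) / z - bessel_poly (S l) z / bessel_poly l z)).
  - now apply is_RInt_gen_euler_sol_H0.
  - pose proof (bessel_poly_pos l z Hz) as HQ.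
    unfold euler_sol_deriv, euler_sol, A, B. simpl pow. rewrite S_INR.
    field. repeat split; lra.
Qed.

Lemma is_RInt_gen_Derive_G0_H0 l z : 0 < z ->
  is_RInt_gen (fun e => exp (- e + z) * Derive (fun z => G0 l z e) z * (H0 l e / H0 l z))
    (at_point z) (Rbar_locally p_infty)
    (INR (S l) / z - bessel_poly (S l) z / bessel_poly l z).
Proof.
  intros Hz. pose proof (pos_INR l) as Hl.
  assert (Hzl : z ^ l <> 0) by (apply pow_nonzero; lra).
  set (A := - INR l / (z ^ S l * (2 * INR l + 1))).
  set (B := - INR (S l) * z ^ l / (2 * INR l + 1)).
  apply (is_RInt_gen_ext_gt (fun e => exp (- e + z) * euler_sol l A B e * (H0 l e / H0 l z))).
  { intros e He. now rewrite Derive_G0_fst by lra. }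
  replace (INR (S l) / z - bessel_poly (S l) z / bessel_poly l z)
    with (euler_sol_deriv l A B z
          - euler_sol l A B z * (INR (S l) / z - bessel_poly (S l) z / bessel_poly l z)).
  - now apply is_RInt_gen_euler_sol_H0.
  - pose proof (bessel_poly_pos l z Hz) as HQ.
    unfold euler_sol_deriv, euler_sol, A, B. simpl pow. rewrite !S_INR.
    field. repeat split; lra.
Qed.

Theorem lemma46 (l : nat) (zeta : R) (hz : 0 < zeta) :
  is_RInt_gen (fun eta => exp (- eta + zeta) * G0 l zeta eta * (H0 l eta / H0 l zeta))
    (at_point zeta) (Rbar_locally p_infty) 1
  /\
  is_RInt_gen (fun eta => exp (- eta + zeta) * Derive (fun z => G0 l z eta) zeta
                          * (H0 l eta / H0 l zeta))
    (at_point zeta) (Rbar_locally p_infty)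
    (-1 + Derive (H0 l) zeta / H0 l zeta).
Proof.
  split; [now apply is_RInt_gen_G0_H0|].
  replace (-1 + Derive (H0 l) zeta / H0 l zeta)
    with (INR (S l) / zeta - bessel_poly (S l) zeta / bessel_poly l zeta).
  - now apply is_RInt_gen_Derive_G0_H0.
  - rewrite Derive_H0, H0_eq_bessel_poly by exact hz.
    pose proof H0_scale_pos. pose proof (bessel_poly_pos l zeta hz). field. lra.
Qed.
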